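(* Let $\mathbf{P_0},\mathbf{P_1}$ be $n\times n$ transition probability matrices of irreducible and aperiodic Markov chains on $n$ states, let $\mathbf{P_s}=(1-s)\mathbf{P_0}+s\mathbf{P_1}$ for $s\in[0,1]$, and let $\pi_s$ be the stationary distribution of $\mathbf{P_s}$. Then $s\mapsto\pi_s$ is continuous at $s=0$ with respect to the total variation norm. In particular, if $\epsilon>0$, $\sigma$ is the smallest nonzero singular value of $\mathbb{I}-\mathbf{P_0}$, and $\delta=\frac{\epsilon\sigma}{2n^{3/2}}$, then $\|\pi_s-\pi_0\|_{TV}\le\epsilon$ for all $s\in[0,1]$ with $s\le\delta$.
   Context: Distributions are row vectors; $\|\mu-\nu\|_{TV}=\frac12\|\mu-\nu\|_1$. Singular values are with respect to the Euclidean inner product; $\mathbb{I}$ is the identity matrix. *)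

From HB Require Import structures.
From mathcomp Require Import all_boot all_order all_algebra.
From mathcomp Require Import reals.
Set Implicit Arguments. Unset Strict Implicit. Unset Printing Implicit Defensive.
Import Order.TTheory GRing.Theory Num.Theory.
Local Open Scope ring_scope.

Section MarkovDefs.
Variable R : realType.
Variable n : nat.

Definition mxpow (P : 'M[R]_n) (k : nat) : 'M[R]_n :=
  iter k (fun A => A *m P) 1%:M.

Definition stochastic (P : 'M[R]_n) : Prop :=
  (forall i j, 0 <= P i j) /\ (forall i, \sum_j P i j = 1).

Definition irreducible (P : 'M[R]_n) : Prop :=
  forall i j, exists k : nat, 0 < mxpow P k i j.

(* aperiodic: for every state, the gcd of its return times
   {k >= 1 | P^k i i > 0} is 1, i.e. 1 is its only common divisor *)
Definition aperiodic (P : 'M[R]_n) : Prop :=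
  forall i, forall d : nat,
    (forall k : nat, (0 < k)%N -> 0 < mxpow P k i i -> (d %| k)%N) -> d = 1%N.

Definition distribution (mu : 'rV[R]_n) : Prop :=
  (forall i, 0 <= mu 0 i) /\ \sum_i mu 0 i = 1.

Definition stationary (P : 'M[R]_n) (mu : 'rV[R]_n) : Prop :=
  distribution mu /\ mu *m P = mu.

Definition tv_dist (mu nu : 'rV[R]_n) : R :=
  2^-1 * \sum_i `|mu 0 i - nu 0 i|.

(* sigma is the smallest nonzero singular value of A (w.r.t. the Euclidean
   inner product): the singular values of A are the square roots of the
   eigenvalues of A^T A, so sigma > 0, sigma^2 is an eigenvalue of A^T A,
   and sigma^2 <= every nonzero eigenvalue of A^T A. *)
Definition smallest_nonzero_singular_value (A : 'M[R]_n) (sigma : R) : Prop :=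
  0 < sigma /\ eigenvalue (A^T *m A) (sigma ^+ 2) /\
  (forall lam : R, eigenvalue (A^T *m A) lam -> lam != 0 -> sigma ^+ 2 <= lam).

End MarkovDefs.

(* Let A = I - P0 and d = pi_s - pi_0.  Stationarity of pi_s gives
   d A = s (pi_s P1 - pi_s P0), whose squared Euclidean norm is at most 2 s^2.
   For irreducible P0 every left fixed vector is a multiple of pi_0, so the
   component x of d orthogonal to pi_0 is orthogonal to the left kernel of A,
   and the spectral theorem for A A^T (applied over R[i]) gives
   sigma^2 |x|^2 <= |x A|^2 = |d A|^2.  As the entries of d sum to 0,
   |d|^2 <= 2 (n + 1) |x|^2, and Cauchy-Schwarz gives 4 TV^2 <= n |d|^2; hence
   sigma^2 TV^2 <= n (n + 1) s^2, which yields the stated modulus.  Continuity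
   follows by taking for sigma^2 the least positive eigenvalue of A^T A. *)

From HB Require Import structures.
From mathcomp Require Import all_boot all_order all_algebra.
From mathcomp Require Import reals.
From mathcomp Require Import ring lra complex polyrcf.
Import Order.TTheory GRing.Theory Num.Theory.
Set Implicit Arguments. Unset Strict Implicit. Unset Printing Implicit Defensive.
Local Open Scope ring_scope.

Section VectorDot.
Variables (R : realDomainType) (n : nat).

Definition vdot (x y : 'rV[R]_n) : R := \sum_j x 0 j * y 0 j.

Lemma vdotC (x y : 'rV[R]_n) : vdot x y = vdot y x.
Proof. by apply: eq_bigr => j _; rewrite mulrC. Qed.

Lemma vdotZl a (x y : 'rV[R]_n) : vdot (a *: x) y = a * vdot x y.
Proof. by rewrite /vdot mulr_sumr; apply: eq_bigr => j _; rewrite mxE mulrA. Qed.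

Lemma vdotZr a (x y : 'rV[R]_n) : vdot x (a *: y) = a * vdot x y.
Proof. by rewrite vdotC vdotZl vdotC. Qed.

Lemma vdotBl (x y z : 'rV[R]_n) : vdot (x - y) z = vdot x z - vdot y z.
Proof. by rewrite /vdot -sumrB; apply: eq_bigr => j _; rewrite !mxE mulrBl. Qed.

Lemma vdot_ge0 (x : 'rV[R]_n) : 0 <= vdot x x.
Proof. by apply: sumr_ge0 => j _; rewrite -expr2 sqr_ge0. Qed.

Lemma vdot_eq0 (x : 'rV[R]_n) : (vdot x x == 0) = (x == 0).
Proof.
apply/idP/eqP => [/eqP/psumr_eq0P x0|->].
  apply/rowP => j; rewrite mxE; apply/eqP; rewrite -sqrf_eq0 expr2 x0 // => k _.
  by rewrite -expr2 sqr_ge0.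
by rewrite /vdot big1 // => j _; rewrite mxE mul0r.
Qed.

Lemma sqr_sum_le (x : 'rV[R]_n) : (\sum_j x 0 j) ^+ 2 <= n%:R * vdot x x.
Proof.
have sum_sq :
    \sum_i \sum_j (x 0 i * x 0 i + x 0 j * x 0 j) = 2 * (n%:R * vdot x x).
  under eq_bigr do rewrite big_split /= sumr_const card_ord -mulr_natl.
  rewrite big_split /= -mulr_sumr sumr_const card_ord -mulr_natl.
  by rewrite /vdot mulr1 -mulr_natl; ring.
have sum_prod : 2 * (\sum_j x 0 j) ^+ 2 = \sum_i \sum_j 2 * (x 0 i * x 0 j).
  rewrite expr2 mulr_suml mulr_sumr; apply: eq_bigr => i _.
  by rewrite mulr_sumr mulr_sumr; apply: eq_bigr => j _.
rewrite -(ler_pM2l (ltr0n _ 2)) sum_prod -sum_sq.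
apply: ler_sum => i _; apply: ler_sum => j _.
by rewrite -subr_ge0 (_ : _ - _ = (x 0 i - x 0 j) ^+ 2) ?sqr_ge0 //; ring.
Qed.

Lemma vdot_le_shift (d p : 'rV[R]_n) c :
  \sum_j d 0 j = 0 -> \sum_j p 0 j = 1 -> vdot p p <= 1 ->
  vdot d d <= 2 * (n%:R + 1) * vdot (d - c *: p) (d - c *: p).
Proof.
move=> d_sum p_sum p_le1; set x := d - c *: p.
have x_sum : \sum_j x 0 j = - c.
  rewrite (eq_bigr (fun j => d 0 j - c * p 0 j)) => [|j _]; last by rewrite !mxE.
  by rewrite sumrB d_sum -mulr_sumr p_sum mulr1 sub0r.
have c_le : c ^+ 2 <= n%:R * vdot x x by rewrite -sqrrN -x_sum sqr_sum_le.
have d_le : vdot d d <= 2 * vdot x x + 2 * c ^+ 2 * vdot p p.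
  rewrite /vdot !mulr_sumr -big_split /=; apply: ler_sum => j _.
  have -> : d 0 j = x 0 j + c * p 0 j by rewrite !mxE subrK.
  rewrite -subr_ge0 (_ : _ - _ = (x 0 j - c * p 0 j) ^+ 2) ?sqr_ge0 //; ring.
have := vdot_ge0 x; have := vdot_ge0 p; have := sqr_ge0 c; nra.
Qed.

End VectorDot.

Section ComplexSpectralGap.
Variables (C : numClosedFieldType) (n : nat).
Local Open Scope sesquilinear_scope.

Lemma dotmx_sum (u v : 'rV[C]_n) : dotmx u v = \sum_j u 0 j * (v 0 j)^*.
Proof. by rewrite dotmxE mxE; apply: eq_bigr => j _; rewrite !mxE. Qed.

Lemma dotmx_ge0 (u : 'rV[C]_n) : 0 <= dotmx u u.
Proof. by rewrite dotmx_sum; apply: sumr_ge0 => j _; exact: mul_conjC_ge0. Qed.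

Lemma dotmx_eq0 (u : 'rV[C]_n) : (dotmx u u == 0) = (u == 0).
Proof.
apply/idP/eqP => [|->]; last by rewrite dotmx_sum big1 // => j _; rewrite mxE mul0r.
rewrite dotmx_sum => /eqP/psumr_eq0P u0; apply/rowP => j; rewrite mxE.
by apply/eqP; rewrite -mul_conjC_eq0 u0 // => k _; exact: mul_conjC_ge0.
Qed.

Lemma dotmxZl a (u v : 'rV[C]_n) : dotmx (a *: u) v = a * dotmx u v.
Proof. by rewrite !dotmxE -scalemxAl mxE. Qed.

Lemma dotmx_mul_adj (B : 'M[C]_n) (u v : 'rV[C]_n) :
  dotmx (u *m B) (v *m B) = dotmx (u *m (B *m B^t*)) v.
Proof. by rewrite !dotmxE trmx_mul map_mxM !mulmxA. Qed.

Lemma eigenvalue_adj_mul_ge0 (B : 'M[C]_n) mu :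
  eigenvalue (B^t* *m B) mu -> 0 <= mu.
Proof.
case/eigenvalueP => v vBB v0.
have vv : 0 < dotmx v v by rewrite lt_def dotmx_eq0 v0 dotmx_ge0.
rewrite -(pmulr_lge0 _ vv) -dotmxZl -vBB.
by have := dotmx_ge0 (v *m B^t*); rewrite dotmx_mul_adj trmxCK.
Qed.

Variable B : 'M[C]_n.
Let M := B *m B^t*.
Let U := spectralmx M.
Let D := spectral_diag M.

Lemma mul_spectral_adj_mul : B *m B^t* = U^t* *m diag_mx D *m U.
Proof.
have /orthomx_spectralP : M \is normalmx.
  by apply/normalmxP; rewrite /M trmx_mul map_mxM trmxCK.
by rewrite invmx_unitary ?spectral_unitarymx.
Qed.

Lemma spectral_row_mul i : row i U *m M = D 0 i *: row i U.
Proof.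
rewrite -row_mul /M mul_spectral_adj_mul !mulmxA.
rewrite (unitarymxP (spectral_unitarymx _)) mul1mx mul_diag_mx.
by apply/rowP => j; rewrite !mxE.
Qed.

Lemma spectral_row_norm i : dotmx (row i U *m B) (row i U *m B) = D 0 i.
Proof.
rewrite dotmx_mul_adj spectral_row_mul dotmxZl.
by have /row_unitarymxP -> := spectral_unitarymx M; rewrite eqxx mulr1.
Qed.

Lemma spectral_diag_eigenvalue i : D 0 i != 0 -> eigenvalue (B^t* *m B) (D 0 i).
Proof.
move=> Di0; apply/eigenvalueP; exists (row i U *m B).
  by rewrite mulmxA -(mulmxA _ B) spectral_row_mul scalemxAl.
by apply: contra Di0; rewrite -dotmx_eq0 spectral_row_norm.
Qed.

Lemma dotmx_mul_spectral (x y : 'rV[C]_n) :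
  dotmx (x *m U^t* *m diag_mx D) (y *m U^t*) = dotmx (x *m M) y.
Proof.
rewrite !dotmxE /M mul_spectral_adj_mul !mulmxA trmx_mul map_mxM trmxCK.
by rewrite !mulmxA.
Qed.

Lemma spectral_gap (lam : C) (x : 'rV[C]_n) : 0 <= lam ->
  (forall mu, eigenvalue (B^t* *m B) mu -> mu != 0 -> lam <= mu) ->
  (forall u, u *m B = 0 -> dotmx x u = 0) ->
  lam * dotmx x x <= dotmx (x *m B) (x *m B).
Proof.
move=> lam0 lam_le x_perp; set w := x *m U^t*.
have w_entry i : w 0 i = dotmx x (row i U).
  by rewrite dotmxE !mxE; apply: eq_bigr => j _; rewrite !mxE.
have -> : dotmx x x = dotmx w w.
  by rewrite !dotmxE /w trmx_mul map_mxM trmxCK mulmxA mulmxKtV ?spectral_unitarymx.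
rewrite dotmx_mul_adj -dotmx_mul_spectral -/w !dotmx_sum mulr_sumr.
apply: ler_sum => i _.
rewrite (_ : (w *m diag_mx D) 0 i = D 0 i * w 0 i); last first.
  by rewrite mul_mx_diag mxE mulrC.
rewrite -mulrA.
have [Di0|Di0] := eqVneq (D 0 i) 0.
  rewrite Di0 w_entry x_perp ?mul0r ?mulr0 //; apply/eqP.
  by rewrite -dotmx_eq0 spectral_row_norm Di0.
by rewrite ler_wpM2r ?mul_conjC_ge0 // lam_le ?spectral_diag_eigenvalue.
Qed.

End ComplexSpectralGap.

Section RealSpectralGap.
Variables (R : rcfType) (n : nat).
Local Open Scope sesquilinear_scope.
Local Notation toC := (real_complex R).
Local Notation mapC := (map_mx toC).

Lemma conj_real_complex (r : R) : (toC r)^* = toC r.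
Proof. exact: conjc_real. Qed.

Lemma dotmx_map (x y : 'rV[R]_n) : dotmx (mapC x) (mapC y) = toC (vdot x y).
Proof.
rewrite dotmx_sum rmorph_sum; apply: eq_bigr => j _.
by rewrite !mxE conj_real_complex rmorphM.
Qed.

Lemma real_complex_eq0 (x y : R) : toC x + 'i%C * toC y = 0 -> x = 0 /\ y = 0.
Proof. by case; rewrite !(mul0r, mul1r, mulr0, subr0, addr0, add0r). Qed.

Lemma map_complex_eq0 (a b : 'rV[R]_n) :
  mapC a + 'i%C *: mapC b = 0 -> a = 0 /\ b = 0.
Proof.
move=> /rowP ab0; split; apply/rowP => j; have := ab0 j; rewrite !mxE;
  by case/real_complex_eq0.
Qed.

Lemma complex_rowE (u : 'rV[R[i]]_n) :
  u = mapC (map_mx (@complex.Re R) u) + 'i%C *: mapC (map_mx (@complex.Im R) u).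
Proof. by apply/rowP => j; rewrite !mxE -complexE. Qed.

Lemma map_left_kernel_perp (A : 'M[R]_n) (x : 'rV[R]_n) :
  (forall y, y *m A = 0 -> vdot x y = 0) ->
  forall u, u *m mapC A = 0 -> dotmx (mapC x) u = 0.
Proof.
move=> x_perp u; rewrite (complex_rowE u) mulmxDl -scalemxAl -!map_mxM.
case/map_complex_eq0 => /x_perp Re0 /x_perp Im0.
by rewrite linearDr linearZr_LR /= !dotmx_map Re0 Im0 rmorph0 mulr0 addr0.
Qed.

Lemma map_adj (A : 'M[R]_n) : (mapC A)^t* = mapC A^T.
Proof. by apply/matrixP => i j; rewrite !mxE conj_real_complex. Qed.

Lemma eigenvalue_tr_mul_ge0 (A : 'M[R]_n) mu :
  eigenvalue (A^T *m A) mu -> 0 <= mu.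
Proof.
rewrite -(eigenvalue_map toC) map_mxM -map_adj => /eigenvalue_adj_mul_ge0.
by rewrite ler0c.
Qed.

Lemma vdot_spectral_gap (A : 'M[R]_n) (lam : R) (x : 'rV[R]_n) : 0 <= lam ->
  (forall mu, eigenvalue (A^T *m A) mu -> mu != 0 -> lam <= mu) ->
  (forall y, y *m A = 0 -> vdot x y = 0) ->
  lam * vdot x x <= vdot (x *m A) (x *m A).
Proof.
move=> lam0 lam_le x_perp.
have := @spectral_gap _ _ (mapC A) (toC lam) (mapC x).
rewrite -map_mxM !dotmx_map ler0c => /(_ lam0) gap.
rewrite -lecR rmorphM; apply: gap; last exact: map_left_kernel_perp.
move=> mu eig_mu mu0; have mu_ge0 := eigenvalue_adj_mul_ge0 eig_mu.
have [r mu_r] : exists r, mu = toC r.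
  by exists (complex.Re mu); rewrite {1}[mu]complexE ger0_Im // rmorph0 mulr0 addr0.
move: eig_mu mu0; rewrite mu_r map_adj -map_mxM eigenvalue_map fmorph_eq0 lecR.
exact: lam_le.
Qed.

Lemma seq_pos_lower_bound (s : seq R) :
  exists2 lam, 0 < lam & forall x, x \in s -> 0 < x -> lam <= x.
Proof.
elim: s => [|a s [lam lam0 lam_le]]; first by exists 1.
have [a0|a_le0] := ltrP 0 a.
  exists (Num.min lam a) => [|x]; first by rewrite lt_min lam0 a0.
  by rewrite inE => /predU1P [-> _|xs x0]; rewrite ge_min ?lexx ?orbT ?lam_le.
exists lam => // x; rewrite inE => /predU1P [-> /(le_lt_trans a_le0)|].
  by rewrite ltxx.
exact: lam_le.
Qed.

Lemma eigenvalue_pos_lower_bound (M : 'M[R]_n) :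
  exists2 lam, 0 < lam & forall mu, eigenvalue M mu -> 0 < mu -> lam <= mu.
Proof.
have [lam lam0 lam_le] := seq_pos_lower_bound (rootsR (char_poly M)).
exists lam => // mu; rewrite eigenvalue_root_char => mu_root; apply: lam_le.
by rewrite -(roots_on_rootsR (monic_neq0 (char_poly_monic M))) mu_root.
Qed.

Lemma eigenvalue_tr_mul_lower_bound (A : 'M[R]_n) :
  exists2 lam, 0 < lam &
    forall mu, eigenvalue (A^T *m A) mu -> mu != 0 -> lam <= mu.
Proof.
have [lam lam0 lam_le] := eigenvalue_pos_lower_bound (A^T *m A).
exists lam => // mu eig_mu mu0; apply: lam_le => //.
by rewrite lt_def mu0 (eigenvalue_tr_mul_ge0 eig_mu).
Qed.

End RealSpectralGap.

Section IrreducibleStochastic.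
Variables (R : realType) (n : nat) (P : 'M[R]_n).
Hypotheses (P_stoch : stochastic P) (P_irr : irreducible P).

Lemma mxpow_ge0 k i j : 0 <= mxpow P k i j.
Proof.
elim: k i j => [|k IHk] i j; first by rewrite mxE ler0n.
by rewrite [mxpow _ _]/= mxE; apply: sumr_ge0 => l _; rewrite mulr_ge0 ?P_stoch.1.
Qed.

Lemma fixed_mxpow (w : 'rV[R]_n) k : w *m P = w -> w *m mxpow P k = w.
Proof.
by move=> wP; elim: k => [|k IHk]; rewrite ?mulmx1 // [mxpow _ _]/= mulmxA IHk.
Qed.

Lemma sum_mulmx_stochastic (w : 'rV[R]_n) : \sum_j (w *m P) 0 j = \sum_j w 0 j.
Proof.
under eq_bigr do rewrite mxE.
by rewrite exchange_big; apply: eq_bigr => k _; rewrite -mulr_sumr P_stoch.2 mulr1.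
Qed.

Lemma distribution_mulmx (mu : 'rV[R]_n) :
  distribution mu -> distribution (mu *m P).
Proof.
case=> mu_ge0 mu_sum; split; last by rewrite sum_mulmx_stochastic.
by move=> j; rewrite mxE; apply: sumr_ge0 => k _; rewrite mulr_ge0 ?P_stoch.1.
Qed.

Lemma fixed_ge0_pos (w : 'rV[R]_n) j : (forall l, 0 <= w 0 l) -> w *m P = w ->
  0 < w 0 j -> forall i, 0 < w 0 i.
Proof.
move=> w_ge0 wP wj i; have [k Pk] := P_irr j i.
rewrite -(fixed_mxpow k wP) mxE (bigD1 j) //=.
apply: lt_le_trans (mulr_gt0 wj Pk) _; rewrite lerDl.
by apply: sumr_ge0 => l _; rewrite mulr_ge0 ?mxpow_ge0.
Qed.

Lemma fixed_norm (u : 'rV[R]_n) :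
  u *m P = u -> map_mx Num.norm u *m P = map_mx Num.norm u.
Proof.
move=> uP; set v := map_mx _ u.
have v_le j : v 0 j <= (v *m P) 0 j.
  rewrite mxE -{1}uP !mxE; apply: le_trans (ler_norm_sum _ _ _) _.
  by apply: ler_sum => k _; rewrite !mxE normrM (ger0_norm (P_stoch.1 _ _)).
have : \sum_j ((v *m P) 0 j - v 0 j) = 0 by rewrite sumrB sum_mulmx_stochastic subrr.
move=> /psumr_eq0P vP; apply/rowP => j; apply/eqP; rewrite -subr_eq0 vP // => k _.
by rewrite subr_ge0.
Qed.

Lemma fixed_pos (u : 'rV[R]_n) j : u *m P = u -> 0 < u 0 j -> forall i, 0 < u 0 i.
Proof.
move=> uP uj i.
(* |u| + u is a nonnegative fixed vector, positive exactly where u is. *)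
pose p := map_mx Num.norm u + u.
have p_ge0 l : 0 <= p 0 l by rewrite !mxE -lerBlDr sub0r -normrN ler_norm.
have pP : p *m P = p by rewrite mulmxDl fixed_norm // uP.
have pj : 0 < p 0 j by rewrite !mxE gtr0_norm // addr_gt0.
have := fixed_ge0_pos p_ge0 pP pj i; rewrite !mxE.
by case: (ltrP 0 (u 0 i)) => // ui; rewrite ler0_norm // addNr ltxx.
Qed.

Lemma fixed_sum0 (u : 'rV[R]_n) : u *m P = u -> \sum_j u 0 j = 0 -> u = 0.
Proof.
move=> uP u_sum; apply/rowP => j; rewrite mxE.
have sum_pos (v : 'rV[R]_n) : v *m P = v -> 0 < v 0 j -> 0 < \sum_l v 0 l.
  move=> vP vj; rewrite (bigD1 j) //= ltr_wpDr // sumr_ge0 // => l _.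
  exact/ltW/(fixed_pos vP vj).
have [uj|uj|//] := ltgtP (u 0 j) 0.
  have nuP : - u *m P = - u by rewrite mulNmx uP.
  have := sum_pos (- u) nuP; rewrite mxE oppr_gt0 => /(_ uj).
  rewrite (eq_bigr (fun l => - u 0 l)) => [|l _]; last by rewrite mxE.
  by rewrite sumrN u_sum oppr0 ltxx.
by have := sum_pos u uP uj; rewrite u_sum ltxx.
Qed.

Lemma fixed_scale_stationary (p y : 'rV[R]_n) : p *m P = p -> \sum_j p 0 j = 1 ->
  y *m P = y -> y = (\sum_j y 0 j) *: p.
Proof.
move=> pP p_sum yP; apply/eqP; rewrite -subr_eq0; apply/eqP/fixed_sum0.
  by rewrite mulmxBl -scalemxAl pP yP.
rewrite (eq_bigr (fun j => y 0 j - (\sum_j y 0 j) * p 0 j)) => [|j _]; last first.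
  by rewrite !mxE.
by rewrite sumrB -mulr_sumr p_sum mulr1 subrr.
Qed.

End IrreducibleStochastic.

Section Distributions.
Variables (R : realType) (n : nat).

Lemma distribution_le1 (p : 'rV[R]_n) j : distribution p -> p 0 j <= 1.
Proof.
by case=> p_ge0 <-; rewrite (bigD1 j) //= lerDl sumr_ge0.
Qed.

Lemma vdot_distribution_le1 (p : 'rV[R]_n) : distribution p -> vdot p p <= 1.
Proof.
move=> p_dist; rewrite -p_dist.2; apply: ler_sum => j _.
by rewrite ler_piMr ?distribution_le1 ?p_dist.1.
Qed.

Lemma vdot_sub_distribution_le2 (p q : 'rV[R]_n) :
  distribution p -> distribution q -> vdot (p - q) (p - q) <= 2.
Proof.
move=> p_dist q_dist; rewrite -[2]/(1 + 1) -{1}p_dist.2 -q_dist.2 -big_split /=.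
apply: ler_sum => j _; rewrite !mxE.
have := distribution_le1 j p_dist; have := distribution_le1 j q_dist.
have := p_dist.1 j; have := q_dist.1 j; nra.
Qed.

Lemma tv_dist_sqr_le (mu nu : 'rV[R]_n) :
  4 * tv_dist mu nu ^+ 2 <= n%:R * vdot (mu - nu) (mu - nu).
Proof.
set d := mu - nu.
have -> : 4 * tv_dist mu nu ^+ 2 = (\sum_j (map_mx Num.norm d) 0 j) ^+ 2.
  rewrite /tv_dist (eq_bigr (fun j => (map_mx Num.norm d) 0 j)) => [|j _].
    by set t := \sum_j _; field.
  by rewrite !mxE.
have -> : vdot d d = vdot (map_mx Num.norm d) (map_mx Num.norm d).
  by apply: eq_bigr => j _; rewrite !mxE -normrM ger0_norm // -expr2 sqr_ge0.
exact: sqr_sum_le.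
Qed.

Lemma distribution_dim_gt0 (mu : 'rV[R]_n) : distribution mu -> (0 < n)%N.
Proof.
by case: n mu => // mu [_]; rewrite big_ord0 => /eqP; rewrite eq_sym oner_eq0.
Qed.

Lemma tv_dist_ge0 (mu nu : 'rV[R]_n) : 0 <= tv_dist mu nu.
Proof. by rewrite mulr_ge0 ?invr_ge0 ?sumr_ge0. Qed.

End Distributions.

Section StationaryPerturbation.
Variables (R : realType) (n : nat) (P0 P1 : 'M[R]_n) (pi : R -> 'rV[R]_n).
Hypotheses (P0_stoch : stochastic P0) (P0_irr : irreducible P0).
Hypothesis P1_stoch : stochastic P1.
Hypothesis pi_stat :
  forall s, 0 <= s <= 1 -> stationary ((1 - s) *: P0 + s *: P1) (pi s).

Local Notation A := (1%:M - P0).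

Lemma stationary0 : stationary P0 (pi 0).
Proof.
by have := pi_stat (s := 0); rewrite lexx ler01 subr0 scale1r scale0r addr0; apply.
Qed.

Lemma stationary_defect s : 0 <= s <= 1 ->
  (pi s - pi 0) *m A = s *: (pi s *m P1 - pi s *m P0).
Proof.
move=> s01; have [_ pisP] := pi_stat s01; have [_ pi0P] := stationary0.
rewrite mulmxBl !mulmxBr !mulmx1 pi0P subrr subr0.
move: pisP; rewrite mulmxDr -!scalemxAr.
move: (pi s *m P0) (pi s *m P1) => u v <-.
by apply/rowP => j; rewrite !mxE; ring.
Qed.

Lemma left_kernel_perp (x : 'rV[R]_n) :
  vdot x (pi 0) = 0 -> forall y, y *m A = 0 -> vdot x y = 0.
Proof.
move=> x_perp y; rewrite mulmxBr mulmx1 => /eqP; rewrite subr_eq0 eq_sym => /eqP yP.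
have [[_ pi0_sum] pi0P] := stationary0.
rewrite (fixed_scale_stationary P0_stoch P0_irr pi0P pi0_sum yP).
by rewrite vdotZr x_perp mulr0.
Qed.

Lemma tv_dist_sqr_stationary (lam s : R) : 0 <= lam ->
  (forall mu, eigenvalue (A^T *m A) mu -> mu != 0 -> lam <= mu) -> 0 <= s <= 1 ->
  lam * tv_dist (pi s) (pi 0) ^+ 2 <= n%:R * (n%:R + 1) * s ^+ 2.
Proof.
move=> lam0 lam_le s01.
have [pis_dist _] := pi_stat s01; have [pi0_dist pi0P] := stationary0.
set d := pi s - pi 0; set p := pi 0 in pi0_dist pi0P *.
have p_neq0 : vdot p p != 0.
  rewrite vdot_eq0; apply/eqP => p0; have := pi0_dist.2.
  by rewrite p0 big1 => [/eqP|j _]; rewrite ?mxE // eq_sym oner_eq0.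
set x := d - (vdot d p / vdot p p) *: p.
have x_perp : vdot x p = 0 by rewrite vdotBl vdotZl divfK ?subrr.
have pA : p *m A = 0 by rewrite mulmxBr mulmx1 pi0P subrr.
have gap : lam * vdot x x <= 2 * s ^+ 2.
  apply: le_trans (vdot_spectral_gap lam0 lam_le (left_kernel_perp x_perp)) _.
  rewrite mulmxBl -scalemxAl pA scaler0 subr0 stationary_defect //.
  rewrite vdotZl vdotZr mulrA -expr2 mulrC ler_wpM2r ?sqr_ge0 //.
  by apply: vdot_sub_distribution_le2; apply: distribution_mulmx.
have d_sum : \sum_j d 0 j = 0.
  rewrite (eq_bigr (fun j => pi s 0 j - p 0 j)) => [|j _]; last by rewrite !mxE.
  by rewrite sumrB pis_dist.2 pi0_dist.2 subrr.
have d_le := vdot_le_shift (vdot d p / vdot p p) d_sum pi0_dist.2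
  (vdot_distribution_le1 pi0_dist).
have tv_le := tv_dist_sqr_le (pi s) p.
rewrite -/x in d_le; rewrite -/d in tv_le.
(* 4 lam t^2 <= lam n |d|^2 <= 2 n (n + 1) lam |x|^2 <= 4 n (n + 1) s^2 *)
have N_ge0 : 0 <= n%:R :> R := ler0n _ _.
have h1 := ler_wpM2l lam0 tv_le.
have h2 := ler_wpM2l (mulr_ge0 lam0 N_ge0) d_le.
have c_ge0 : 0 <= 2 * n%:R * (n%:R + 1) :> R by rewrite !mulr_ge0 ?addr_ge0.
have h3 := ler_wpM2l c_ge0 gap.
lra.
Qed.

Lemma tv_dist_stationary_le (sigma eps s : R) : 0 < sigma ->
  (forall mu, eigenvalue (A^T *m A) mu -> mu != 0 -> sigma ^+ 2 <= mu) ->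
  0 < eps -> 0 <= s <= 1 -> s <= eps * sigma / (2 * (n%:R * Num.sqrt n%:R)) ->
  tv_dist (pi s) (pi 0) <= eps.
Proof.
move=> sigma0 sigma_le eps0 s01; have [s0 _] := andP s01.
have bound := tv_dist_sqr_stationary (sqr_ge0 sigma) sigma_le s01.
have t_ge0 := tv_dist_ge0 (pi s) (pi 0); set t := tv_dist _ _ in bound t_ge0 *.
have N_ge1 : 1 <= n%:R :> R by rewrite ler1n (distribution_dim_gt0 stationary0.1).
set N := n%:R in N_ge1 bound *; set q := Num.sqrt N.
have N_gt0 : 0 < N := lt_le_trans ltr01 N_ge1.
have q_sqr : q ^+ 2 = N by rewrite sqr_sqrtr // ltW.
have q_gt0 : 0 < q by rewrite sqrtr_gt0.
have K_gt0 : 0 < 2 * (N * q) by rewrite !mulr_gt0.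
rewrite ler_pdivlMr // => s_le.
have s_sqr : s ^+ 2 * (4 * N ^+ 3) <= (eps * sigma) ^+ 2.
  have -> : s ^+ 2 * (4 * N ^+ 3) = (s * (2 * (N * q))) ^+ 2.
    by rewrite !exprMn q_sqr; ring.
  by rewrite !expr2 ler_pM // mulr_ge0 // ltW.
have t_sqr : t ^+ 2 <= eps ^+ 2.
  have c_gt0 : 0 < 4 * N ^+ 2 * sigma ^+ 2 by rewrite !mulr_gt0 ?exprn_gt0.
  rewrite -(ler_pM2l c_gt0).
  have h1 := ler_wpM2l (ltW (mulr_gt0 (ltr0n _ 4) (exprn_gt0 2 N_gt0))) bound.
  have h2 := ler_wpM2l (ltW (addr_gt0 N_gt0 ltr01)) s_sqr.
  have h3 : N + 1 <= 4 * N ^+ 2 by nra.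
  have h4 := ler_wpM2r (sqr_ge0 (eps * sigma)) h3.
  rewrite exprMn in h2 h4; lra.
nra.
Qed.

End StationaryPerturbation.

Theorem proposition4 (R : realType) (n : nat) (P0 P1 : 'M[R]_n)
  (pi : R -> 'rV[R]_n) :
  stochastic P0 -> irreducible P0 -> aperiodic P0 ->
  stochastic P1 -> irreducible P1 -> aperiodic P1 ->
  (forall s : R, 0 <= s <= 1 ->
     stationary ((1 - s) *: P0 + s *: P1) (pi s)) ->
  (* continuity of s |-> pi_s at s = 0 (within [0,1]) in TV distance *)
  (forall eps : R, 0 < eps -> exists2 delta : R, 0 < delta &
     forall s : R, 0 <= s <= 1 -> s <= delta -> tv_dist (pi s) (pi 0) <= eps)
  /\
  (* explicit modulus *)
  (forall (eps sigma : R), 0 < eps ->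
     smallest_nonzero_singular_value (1%:M - P0) sigma ->
     forall s : R, 0 <= s <= 1 ->
       s <= eps * sigma / (2 * (n%:R * Num.sqrt n%:R)) ->
       tv_dist (pi s) (pi 0) <= eps).
Proof.
move=> P0_stoch P0_irr _ P1_stoch _ _ pi_stat.
have tv_le := tv_dist_stationary_le P0_stoch P0_irr P1_stoch pi_stat.
split=> [eps eps0|eps sigma eps0 [sigma0 [_ sigma_le]] s s01]; last exact: tv_le.
have [lam lam0 lam_le] := eigenvalue_tr_mul_lower_bound (1%:M - P0).
have n_gt0 := distribution_dim_gt0 (stationary0 pi_stat).1.
exists (eps * Num.sqrt lam / (2 * (n%:R * Num.sqrt n%:R))) => [|s s01 s_le].
  by rewrite divr_gt0 ?mulr_gt0 ?sqrtr_gt0 ?ltr0n.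
by apply: (tv_le (Num.sqrt lam)) => //; rewrite ?sqrtr_gt0 ?sqr_sqrtr ?ltW.
Qed.
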